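(* Let $(\mathbb{R}^{2n},\omega)$ be the standard symplectic vector space, $\mathrm{Sp}(n)=\{\psi\in\mathrm{Gl}(2n,\mathbb{R})\mid \omega(\psi v,\psi w)=\omega(v,w)\ \forall v,w\}$, and let $\mathscr{A}(n)=\{S\in\mathrm{Gl}(2n,\mathbb{R})\mid S^2=\mathbb{1},\ \omega(Sv,Sw)=-\omega(v,w)\ \forall v,w\in\mathbb{R}^{2n}\}$ be the space of linear anti-symplectic involutions. Let $R=\begin{pmatrix}\mathbb{1}&0\\0&-\mathbb{1}\end{pmatrix}$ with respect to the splitting $\mathbb{R}^{2n}=\mathbb{R}^n\oplus\mathbb{R}^n$, and let $\mathrm{Sp}^R(n)=\{\psi\in\mathrm{Sp}(n)\mid \psi=R\psi^{-1}R\}$. Identify $\mathrm{Gl}(n,\mathbb{R})$ with the subgroup $\left\{\begin{pmatrix}A&0\\0&(A^T)^{-1}\end{pmatrix}\mid A\in\mathrm{Gl}(n,\mathbb{R})\right\}$ of $\mathrm{Sp}(n)$. Then $\mathrm{Sp}^R(n)$, $\mathscr{A}(n)$, and the homogeneous space (right coset space) $\mathrm{Gl}(n,\mathbb{R})\backslash\mathrm{Sp}(n)$ are pairwise diffeomorphic.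
   Context: $\omega$ is the standard symplectic form on $\mathbb{R}^{2n}=\mathbb{R}^n\oplus\mathbb{R}^n$, for which the two factors $\mathbb{R}^n\oplus 0$ and $0\oplus\mathbb{R}^n$ are Lagrangian (the standard splitting $\mathbb{R}^{2n}\cong T^*\mathbb{R}^n$), so that $R$ is anti-symplectic. *)

From HB Require Import structures.
From mathcomp Require Import all_boot all_order all_algebra.
From mathcomp Require Import all_classical all_reals all_analysis.
Set Implicit Arguments. Unset Strict Implicit. Unset Printing Implicit Defensive.
Import Order.TTheory GRing.Theory Num.Theory.
Import numFieldNormedType.Exports.
Local Open Scope classical_set_scope.
Local Open Scope ring_scope.

Section Smooth.
Variables (R : realType) (V W : normedModType R).

Fixpoint dirder (f : V -> W) (vs : seq V) : V -> W :=
  match vs with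
  | [::] => f
  | v :: vs' => fun x => 'D_v (dirder f vs') x
  end.

Definition smooth_open (U : set V) (f : V -> W) : Prop :=
  open U /\
  forall (vs : seq V) (x : V), U x ->
    {for x, continuous (dirder f vs)} /\
    (forall v : V, derivable (dirder f vs) x v).

(* smoothness of a map on an arbitrary subset X (Milnor / Guillemin-Pollack):
   locally the restriction of a C^oo map defined on an open set *)
Definition smooth_on (X : set V) (f : V -> W) : Prop :=
  forall x, X x -> exists (U : set V) (F : V -> W),
    U x /\ smooth_open U F /\ (forall y, X y -> U y -> F y = f y).
End Smooth.

Definition diffeomorphic (R : realType) (V W : normedModType R)
  (X : set V) (Y : set W) : Prop :=
  exists (f : V -> W) (g : W -> V),
    (forall x, X x -> Y (f x)) /\ (forall y, Y y -> X (g y)) /\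
    (forall x, X x -> g (f x) = x) /\ (forall y, Y y -> f (g y) = y) /\
    smooth_on X f /\ smooth_on Y g.

Section Symplectic.
Variables (R : realType) (n : nat).

Local Notation M := 'M[R]_(n + n).
Local Notation vec := 'cV[R]_(n + n).

(* standard symplectic matrix w.r.t. R^{2n} = R^n (+) R^n ; both factors
   are Lagrangian *)
Definition Jmx : M := block_mx 0 1%:M (- 1%:M) 0.

Definition omega (v w : vec) : R := (v^T *m Jmx *m w) 0 0.

Definition Rmx : M := block_mx 1%:M 0 0 (- 1%:M).

Definition GL2n : set M := [set A | A \in unitmx].

Definition Sp : set M :=
  [set psi | psi \in unitmx /\
     forall v w : vec, omega (psi *m v) (psi *m w) = omega v w].

Definition antiSp : set M :=
  [set S | S \in unitmx /\ S *m S = 1%:M /\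
     forall v w : vec, omega (S *m v) (S *m w) = - omega v w].

Definition SpR : set M := [set psi | Sp psi /\ psi = Rmx *m invmx psi *m Rmx].

Definition GLemb (A : 'M[R]_n) : M := block_mx A 0 0 (invmx A^T).

Definition GLsub : set M := [set GLemb A | A in [set A | A \in unitmx]].

Definition coset (psi : M) : set M := [set g *m psi | g in GLsub].

Definition cosetSpace : set (set M) := [set coset psi | psi in Sp].

(* the coset space Gl(n)\Sp(n), with its quotient manifold structure, is
   diffeomorphic to the subset Y of a normed space W:  Phi is a bijection
   from the cosets onto Y; Phi \o coset is smooth on Sp(n) (smooth maps out
   of the quotient), and the inverse of Phi locally lifts to smooth maps
   into Sp(n) (smooth maps into the quotient). *)
Definition coset_diffeomorphic (W : normedModType R) (Y : set W) : Prop :=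
  exists Phi : set M -> W,
    (forall C, cosetSpace C -> Y (Phi C)) /\
    (forall C D, cosetSpace C -> cosetSpace D -> Phi C = Phi D -> C = D) /\
    (forall y, Y y -> exists C, cosetSpace C /\ Phi C = y) /\
    smooth_on Sp (fun psi => Phi (coset psi)) /\
    (forall y, Y y -> exists (U : set W) (sigma : W -> M),
        open U /\ U y /\ smooth_on (Y `&` U) sigma /\
        (forall z, Y z -> U z -> Sp (sigma z) /\ Phi (coset (sigma z)) = z)).
End Symplectic.

(* The map [S |-> R S] is a linear involution of the space of matrices that
   exchanges the anti-symplectic involutions and [Sp^R(n)].  For the coset
   space, [Gl(n) psi |-> psi^-1 R psi] is well defined and injective because
   the embedded [Gl(n)] is exactly the centraliser of [R] in [Sp(n)].  It is
   onto the anti-symplectic involutions: [J] exchanges the two eigenspaces of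
   such an [S], so both have dimension [n], [S = N R N^-1] for some [N], and
   [N] can be rescaled on an eigenspace to become symplectic.  Smoothness holds
   because [psi^-1 = - J psi^T J] on [Sp(n)], and because [N0 + S N0 R]
   intertwines [S] and [R] for every involution [S], which yields smooth local
   sections near any given [S]. *)

From HB Require Import structures.
From mathcomp Require Import all_boot all_order all_algebra.
From mathcomp Require Import all_classical all_reals all_analysis.
From mathcomp Require Import zify.
Set Implicit Arguments. Unset Strict Implicit. Unset Printing Implicit Defensive.
Import Order.TTheory GRing.Theory Num.Theory.
Import numFieldNormedType.Exports.
Local Open Scope classical_set_scope.
Local Open Scope ring_scope.

Section SmoothCalculus.
Variables (R : realType) (V : normedModType R).
Implicit Types (U : set V) (W : normedModType R).

Definition cont_derivable_on W U (f : V -> W) :=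
  forall x, U x -> {for x, continuous f} /\ forall v, derivable f x v.

Definition smooth_upto W U k (f : V -> W) :=
  forall vs, (size vs <= k)%N -> cont_derivable_on U (dirder f vs).

(* Stratifying smoothness by the order [k] makes the product rule provable by
   induction on [k]. *)
Definition smooth_in W U (f : V -> W) := open U /\ forall k, smooth_upto U k f.

Lemma smooth_in_smooth_open W U (f : V -> W) : smooth_in U f -> smooth_open U f.
Proof. by move=> [oU sf]; split => // vs x Ux; exact: sf (size vs) vs (leqnn _) x Ux. Qed.

Lemma dirder_rcons W (f : V -> W) vs v :
  dirder f (rcons vs v) = dirder (fun x => 'D_v f x) vs.
Proof. by elim: vs => //= a vs ->. Qed.

Lemma dirder_eq_in W U (f g : V -> W) : open U -> (forall x, U x -> f x = g x) ->
  forall vs x, U x -> dirder f vs x = dirder g vs x.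
Proof.
move=> oU fg; elim=> [|a vs IH] x Ux /=; first exact: fg.
apply: near_eq_derive; apply: filterS (open_nbhs_nbhs (conj oU Ux)) => y Uy.
exact: IH.
Qed.

Lemma continuous_near_eq W (f g : V -> W) x :
  (\forall y \near x, f y = g y) -> {for x, continuous f} -> {for x, continuous g}.
Proof.
move=> fg cf; have fgx : f x = g x := nbhs_singleton fg.
move: cf; rewrite /prop_for /continuous_at fgx; apply: cvg_trans.
by apply: near_eq_cvg; apply: filterS fg.
Qed.

Lemma smooth_upto_eq_in W U k (f g : V -> W) : open U ->
  (forall x, U x -> f x = g x) -> smooth_upto U k f -> smooth_upto U k g.
Proof.
move=> oU fg sf vs svs x Ux; have [cf df] := sf vs svs x Ux.
have fg_near : \forall y \near x, dirder f vs y = dirder g vs y.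
  apply: filterS (open_nbhs_nbhs (conj oU Ux)) => y Uy.
  exact: dirder_eq_in oU fg vs y Uy.
split; first exact: continuous_near_eq fg_near cf.
by move=> v; apply: near_eq_derivable (df v).
Qed.

Lemma smooth_in_eq_in W U (f g : V -> W) :
  (forall x, U x -> f x = g x) -> smooth_in U f -> smooth_in U g.
Proof. by move=> fg [oU sf]; split=> [//|k]; exact: smooth_upto_eq_in (sf k). Qed.

Lemma smooth_in_subset W U U' (f : V -> W) :
  open U' -> U' `<=` U -> smooth_in U f -> smooth_in U' f.
Proof. by move=> oU' U'U [_ sf]; split=> // k vs svs x /U'U; exact: sf. Qed.

Lemma smooth_upto_le W U k l (f : V -> W) :
  (l <= k)%N -> smooth_upto U k f -> smooth_upto U l f.
Proof. by move=> lk sf vs svs; apply: sf; exact: leq_trans lk. Qed.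

Lemma smooth_upto0 W U (f : V -> W) :
  cont_derivable_on U f -> smooth_upto U 0 f.
Proof. by move=> cdf [|//]. Qed.

Lemma smooth_upto_cont_derivable W U k (f : V -> W) :
  smooth_upto U k f -> cont_derivable_on U f.
Proof. by move=> sf; exact: sf [::] isT. Qed.

Lemma smooth_uptoS W U k (f : V -> W) : cont_derivable_on U f ->
  (forall v, smooth_upto U k (fun x => 'D_v f x)) -> smooth_upto U k.+1 f.
Proof.
move=> cdf sDf vs; case/lastP: vs => [|vs v] svs; first exact: cdf.
by rewrite dirder_rcons; apply: sDf; rewrite size_rcons in svs.
Qed.

Lemma smooth_upto_derive W U k (f : V -> W) v :
  smooth_upto U k.+1 f -> smooth_upto U k (fun x => 'D_v f x).
Proof. by move=> sf vs svs; rewrite -dirder_rcons; apply: sf; rewrite size_rcons. Qed.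

Lemma smooth_upto_cst W U k (c : W) : smooth_upto U k (fun _ => c).
Proof.
have dirder_cst vs : dirder (fun _ : V => c) vs = fun _ => if vs is [::] then c else 0.
  by elim: vs => //= a vs ->; apply: funext => x; case: vs => [|b vs]; exact: derive_cst.
move=> vs _ x _; rewrite dirder_cst; split=> [|v]; first exact: cst_continuous.
exact: derivable_cst.
Qed.

Lemma smooth_in_cst W U (c : W) : open U -> smooth_in U (fun _ => c).
Proof. by move=> oU; split=> [//|k]; exact: smooth_upto_cst. Qed.

Lemma smooth_upto_derive_cst W U k (f : V -> W) :
  continuous f -> (forall x v, derivable f x v) ->
  (forall v, exists c, forall x, 'D_v f x = c) -> smooth_upto U k f.
Proof.
move=> cf df Df.
have cdf : cont_derivable_on U f by move=> x _; split=> [|v]; [exact: cf|exact: df].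
case: k => [|k]; first exact: smooth_upto0.
apply: smooth_uptoS => // v; have [c Dfc] := Df v.
by rewrite (funext Dfc); exact: smooth_upto_cst.
Qed.

Lemma cont_derivable_on_add W U (f g : V -> W) :
  cont_derivable_on U f -> cont_derivable_on U g ->
  cont_derivable_on U (fun x => f x + g x).
Proof.
move=> cdf cdg x Ux; have [cf df] := cdf x Ux; have [cg dg] := cdg x Ux.
by split=> [|v]; [exact: continuousD|exact: derivableD].
Qed.

Lemma cont_derivable_on_mul U (f g : V -> R) :
  cont_derivable_on U f -> cont_derivable_on U g ->
  cont_derivable_on U (fun x => f x * g x).
Proof.
move=> cdf cdg x Ux; have [cf df] := cdf x Ux; have [cg dg] := cdg x Ux.
by split=> [|v]; [exact: continuousM|exact: derivableM].
Qed.

Lemma cont_derivable_on_inv U (f : V -> R) : (forall x, U x -> f x != 0) ->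
  cont_derivable_on U f -> cont_derivable_on U (fun x => (f x)^-1).
Proof.
move=> f_neq0 cdf x Ux; have [cf df] := cdf x Ux.
have fx_neq0 := f_neq0 x Ux.
by split=> [|v]; [exact: continuousV|exact: derivableV].
Qed.

Lemma is_derive_scale_cst W (s : V -> R) (a : W) x v : derivable s x v ->
  is_derive x v (fun y => s y *: a) ('D_v s x *: a).
Proof.
move=> ds; have Dsa : (fun h => h^-1 *: ((fun y => s y *: a) (h *: v + x) - s x *: a))
    @ 0^' --> 'D_v s x *: a.
  have -> : (fun h : R => h^-1 *: ((fun y => s y *: a) (h *: v + x) - s x *: a))
          = (fun h => (h^-1 *: (s (h *: v + x) - s x)) *: a).
    by apply: funext => h; rewrite /= -scalerBl scalerA.
  exact: cvgZr_tmp ds.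
by apply: DeriveDef; [apply/cvg_ex; exists ('D_v s x *: a)|exact: cvg_lim Dsa].
Qed.

Lemma cont_derivable_on_scale W U (s : V -> R) (a : W) :
  cont_derivable_on U s -> cont_derivable_on U (fun x => s x *: a).
Proof.
move=> cds x Ux; have [cs ds] := cds x Ux.
split; first exact: continuousZr_tmp.
by move=> v; have [] := is_derive_scale_cst a (ds v).
Qed.

Lemma smooth_upto_add W U k (f g : V -> W) : open U ->
  smooth_upto U k f -> smooth_upto U k g -> smooth_upto U k (fun x => f x + g x).
Proof.
move=> oU; elim: k f g => [|k IH] f g sf sg;
  have cdfg := cont_derivable_on_add (smooth_upto_cont_derivable sf)
    (smooth_upto_cont_derivable sg); first exact: smooth_upto0.
apply: smooth_uptoS => [//|v].
apply: (smooth_upto_eq_in (f := fun x => 'D_v f x + 'D_v g x) oU) => [x Ux|].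
  have [_ df] := smooth_upto_cont_derivable sf Ux.
  by have [_ dg] := smooth_upto_cont_derivable sg Ux; rewrite deriveD.
exact: IH (smooth_upto_derive _ sf) (smooth_upto_derive _ sg).
Qed.

Lemma smooth_upto_mul U k (f g : V -> R) : open U ->
  smooth_upto U k f -> smooth_upto U k g -> smooth_upto U k (fun x => f x * g x).
Proof.
move=> oU; elim: k f g => [|k IH] f g sf sg;
  have cdfg := cont_derivable_on_mul (smooth_upto_cont_derivable sf)
    (smooth_upto_cont_derivable sg); first exact: smooth_upto0.
apply: smooth_uptoS => [//|v].
apply: (smooth_upto_eq_in (f := fun x => f x * 'D_v g x + g x * 'D_v f x) oU)
    => [x Ux|].
  have [_ df] := smooth_upto_cont_derivable sf Ux.
  by have [_ dg] := smooth_upto_cont_derivable sg Ux; rewrite deriveM.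
have [sf' sg'] := (smooth_upto_le (leqnSn k) sf, smooth_upto_le (leqnSn k) sg).
exact: smooth_upto_add oU (IH _ _ sf' (smooth_upto_derive v sg))
  (IH _ _ sg' (smooth_upto_derive v sf)).
Qed.

Lemma smooth_upto_scale W U k (s : V -> R) (a : W) : open U ->
  smooth_upto U k s -> smooth_upto U k (fun x => s x *: a).
Proof.
move=> oU; elim: k s => [|k IH] s ss;
  have cdsa := cont_derivable_on_scale a (smooth_upto_cont_derivable ss);
  first exact: smooth_upto0.
apply: smooth_uptoS => [//|v].
apply: (smooth_upto_eq_in (f := fun x => 'D_v s x *: a) oU) => [x Ux|].
  have [_ ds] := smooth_upto_cont_derivable ss Ux.
  by case: (is_derive_scale_cst a (ds v)).
exact: IH (smooth_upto_derive _ ss).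
Qed.

Lemma smooth_in_add W U (f g : V -> W) :
  smooth_in U f -> smooth_in U g -> smooth_in U (fun x => f x + g x).
Proof. by move=> [oU sf] [_ sg]; split=> [//|k]; exact: smooth_upto_add oU (sf k) (sg k). Qed.

Lemma smooth_in_mul U (f g : V -> R) :
  smooth_in U f -> smooth_in U g -> smooth_in U (fun x => f x * g x).
Proof. by move=> [oU sf] [_ sg]; split=> [//|k]; exact: smooth_upto_mul oU (sf k) (sg k). Qed.

Lemma smooth_in_scale W U (s : V -> R) (a : W) :
  smooth_in U s -> smooth_in U (fun x => s x *: a).
Proof. by move=> [oU ss]; split=> [//|k]; exact: smooth_upto_scale a oU (ss k). Qed.

Lemma smooth_in_opp U (f : V -> R) : smooth_in U f -> smooth_in U (fun x => - f x).
Proof.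
move=> sf; have [oU _] := sf.
apply: (smooth_in_eq_in (f := fun x => -1 * f x)); first by move=> x _; rewrite mulN1r.
by apply: (smooth_in_mul _ sf); exact: smooth_in_cst.
Qed.

Lemma smooth_in_inv U (f : V -> R) : (forall x, U x -> f x != 0) ->
  smooth_in U f -> smooth_in U (fun x => (f x)^-1).
Proof.
move=> f_neq0 [oU sf]; split=> [//|k].
have cdf1 := cont_derivable_on_inv f_neq0 (smooth_upto_cont_derivable (sf 0%N)).
elim: k => [|k IH]; first exact: smooth_upto0.
apply: smooth_uptoS => [//|v].
apply: (smooth_upto_eq_in
    (f := fun x => -1 * ((f x)^-1 * (f x)^-1) * 'D_v f x) oU) => [x Ux|].
  have [_ df] := smooth_upto_cont_derivable (sf 0%N) Ux.
  by rewrite deriveV ?f_neq0 // -exprVn expr2 mulN1r.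
apply: (smooth_upto_mul oU _ (smooth_upto_derive v (sf k.+1))).
exact: smooth_upto_mul oU (smooth_upto_cst _) (smooth_upto_mul oU IH IH).
Qed.

Lemma smooth_in_sum W U (I : Type) (r : seq I) (F : I -> V -> W) : open U ->
  (forall i, smooth_in U (F i)) -> smooth_in U (fun x => \sum_(i <- r) F i x).
Proof.
move=> oU sF; elim: r => [|i r IH].
  apply: (smooth_in_eq_in (f := fun _ => 0)); first by move=> x _; rewrite big_nil.
  exact: smooth_in_cst.
apply: (smooth_in_eq_in (f := fun x => F i x + \sum_(j <- r) F j x)) => [x _|].
  by rewrite big_cons.
exact: smooth_in_add (sF i) IH.
Qed.

Lemma smooth_in_prod U (I : Type) (r : seq I) (F : I -> V -> R) : open U ->
  (forall i, smooth_in U (F i)) -> smooth_in U (fun x => \prod_(i <- r) F i x).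
Proof.
move=> oU sF; elim: r => [|i r IH].
  apply: (smooth_in_eq_in (f := fun _ => 1 : R)); first by move=> x _; rewrite big_nil.
  exact: smooth_in_cst.
apply: (smooth_in_eq_in (f := fun x => F i x * \prod_(j <- r) F j x)) => [x _|].
  by rewrite big_cons.
exact: smooth_in_mul (sF i) IH.
Qed.

End SmoothCalculus.

Section SmoothMatrix.
Variables (R : realType) (V : normedModType R) (U : set V).
Hypothesis oU : open U.

Definition smooth_mx p q (F : V -> 'M[R]_(p, q)) :=
  forall i j, smooth_in U (fun z => F z i j).

Lemma smooth_mx_smooth_in p q (F : V -> 'M[R]_(p, q)) : smooth_mx F -> smooth_in U F.
Proof.
move=> sF.
apply: (smooth_in_eq_in (f := fun z => \sum_i \sum_j F z i j *: delta_mx i j)).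
  by move=> z _; rewrite -matrix_sum_delta.
apply: smooth_in_sum oU _ => i; apply: smooth_in_sum oU _ => j.
exact: smooth_in_scale (sF i j).
Qed.

Lemma smooth_mx_smooth_on (X : set V) p q (F f : V -> 'M[R]_(p, q)) :
  smooth_mx F -> X `<=` U -> (forall x, X x -> F x = f x) -> smooth_on X f.
Proof.
move=> sF XU Ff x Xx; exists U, F; split; first exact: XU.
split; first exact/smooth_in_smooth_open/smooth_mx_smooth_in.
by move=> y Xy _; exact: Ff.
Qed.

Lemma smooth_mx_cst p q (A : 'M[R]_(p, q)) : smooth_mx (fun _ => A).
Proof. by move=> i j; exact: smooth_in_cst. Qed.

Lemma smooth_mx_add p q (F G : V -> 'M[R]_(p, q)) :
  smooth_mx F -> smooth_mx G -> smooth_mx (fun z => F z + G z).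
Proof.
move=> sF sG i j; apply: (smooth_in_eq_in (f := fun z => F z i j + G z i j)).
  by move=> z _; rewrite mxE.
exact: smooth_in_add (sF i j) (sG i j).
Qed.

Lemma smooth_mx_opp p q (F : V -> 'M[R]_(p, q)) :
  smooth_mx F -> smooth_mx (fun z => - F z).
Proof.
move=> sF i j; apply: (smooth_in_eq_in (f := fun z => - F z i j)).
  by move=> z _; rewrite mxE.
exact: smooth_in_opp (sF i j).
Qed.

Lemma smooth_mx_mul p q r (F : V -> 'M[R]_(p, q)) (G : V -> 'M[R]_(q, r)) :
  smooth_mx F -> smooth_mx G -> smooth_mx (fun z => F z *m G z).
Proof.
move=> sF sG i j; apply: (smooth_in_eq_in (f := fun z => \sum_k F z i k * G z k j)).
  by move=> z _; rewrite mxE.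
by apply: smooth_in_sum oU _ => k; exact: smooth_in_mul (sF i k) (sG k j).
Qed.

Lemma smooth_mx_tr p q (F : V -> 'M[R]_(p, q)) :
  smooth_mx F -> smooth_mx (fun z => (F z)^T).
Proof.
move=> sF i j; apply: (smooth_in_eq_in (f := fun z => F z j i)); last exact: sF.
by move=> z _; rewrite mxE.
Qed.

Lemma smooth_mx_block p1 p2 q1 q2 (A : V -> 'M[R]_(p1, q1)) (B : V -> 'M[R]_(p1, q2))
    (C : V -> 'M[R]_(p2, q1)) (D : V -> 'M[R]_(p2, q2)) :
  smooth_mx A -> smooth_mx B -> smooth_mx C -> smooth_mx D ->
  smooth_mx (fun z => block_mx (A z) (B z) (C z) (D z)).
Proof.
move=> sA sB sC sD i j; rewrite -(splitK i) -(splitK j).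
case: (fintype.split i) => i'; case: (fintype.split j) => j'.
- by apply: (smooth_in_eq_in _ (sA i' j')) => z _; rewrite block_mxEul.
- by apply: (smooth_in_eq_in _ (sB i' j')) => z _; rewrite block_mxEur.
- by apply: (smooth_in_eq_in _ (sC i' j')) => z _; rewrite block_mxEdl.
- by apply: (smooth_in_eq_in _ (sD i' j')) => z _; rewrite block_mxEdr.
Qed.

Lemma smooth_mx_ursub p1 p2 q1 q2 (F : V -> 'M[R]_(p1 + p2, q1 + q2)) :
  smooth_mx F -> smooth_mx (fun z => ursubmx (F z)).
Proof.
move=> sF i j; apply: (smooth_in_eq_in _ (sF (lshift p2 i) (rshift q1 j))).
by move=> z _; rewrite !mxE.
Qed.

Lemma smooth_in_det m (F : V -> 'M[R]_m) :
  smooth_mx F -> smooth_in U (fun z => \det (F z)).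
Proof.
move=> sF; apply: smooth_in_sum oU _ => s.
apply: smooth_in_mul (smooth_in_cst _ oU) _.
by apply: smooth_in_prod oU _ => i; exact: sF.
Qed.

Lemma smooth_mx_adj m (F : V -> 'M[R]_m) :
  smooth_mx F -> smooth_mx (fun z => \adj (F z)).
Proof.
move=> sF i j.
apply: (smooth_in_eq_in (f := fun z => (-1) ^+ (j + i) * \det (row' j (col' i (F z))))).
  by move=> z _; rewrite mxE.
apply: smooth_in_mul (smooth_in_cst _ oU) (smooth_in_det _) => k l.
by apply: (smooth_in_eq_in _ (sF (lift j k) (lift i l))) => z _; rewrite !mxE.
Qed.

Lemma smooth_mx_inv m (F : V -> 'M[R]_m) : (forall z, U z -> F z \in unitmx) ->
  smooth_mx F -> smooth_mx (fun z => invmx (F z)).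
Proof.
move=> Funit sF i j.
apply: (smooth_in_eq_in (f := fun z => (\det (F z))^-1 * \adj (F z) i j)).
  by move=> z Uz; rewrite /invmx Funit // [in RHS]mxE.
apply: smooth_in_mul (smooth_mx_adj sF i j).
apply: smooth_in_inv (smooth_in_det sF) => z Uz.
by rewrite -unitfE -unitmxE Funit.
Qed.

End SmoothMatrix.

Section SmoothCoordinates.
Variables (R : realType) (p q : nat) (U : set 'M[R]_(p, q)).
Hypothesis oU : open U.

Lemma smooth_in_coord i j : smooth_in U (fun z : 'M[R]_(p, q) => z i j).
Proof.
split=> [//|k]; apply: smooth_upto_derive_cst => [x|x v|v].
- exact: coord_continuous.
- by have /derivable_mxP := @derivable_id _ _ x v; exact.
- exists (v i j) => x; have := derive_mx (@derivable_id _ _ x v).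
  by rewrite derive_id => /(congr1 (fun A : 'M[R]_(p, q) => A i j)); rewrite mxE.
Qed.

Lemma smooth_mx_id : smooth_mx U (fun z : 'M[R]_(p, q) => z).
Proof. by move=> i j; exact: smooth_in_coord. Qed.

End SmoothCoordinates.

Section MatrixFacts.
Variable F : numFieldType.

Lemma invmx_uniq m (A B : 'M[F]_m) : B *m A = 1%:M -> invmx A = B.
Proof.
move=> BA1; have [_ uA] := mulmx1_unit BA1.
by rewrite -[invmx A]mul1mx -BA1 mulmxK.
Qed.

Lemma invmxM m (A B : 'M[F]_m) : A \in unitmx -> B \in unitmx ->
  invmx (A *m B) = invmx B *m invmx A.
Proof. by move=> uA uB; apply: invmx_uniq; rewrite -mulmxA mulKmx // mulVmx. Qed.

Lemma mx_form_eq m (X Y : 'M[F]_m) :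
  (forall v w : 'cV_m, (v^T *m X *m w) 0 0 = (v^T *m Y *m w) 0 0) -> X = Y.
Proof.
move=> XY; apply/matrixP => i j; have := XY (delta_mx i 0) (delta_mx j 0).
by rewrite !trmx_delta -!rowE -!colE !mxE.
Qed.

Lemma oppmx_eq_self p q (X : 'M[F]_(p, q)) : - X = X -> X = 0.
Proof.
move=> NX; have XX0 : X + X = 0 by rewrite -{1}NX addNr.
by rewrite -[X]scale1r (splitr 1) scalerDl -scalerDr XX0 scaler0.
Qed.

Lemma mxrank_mulmx_unit m p (A : 'M[F]_m) (X : 'M[F]_(m, p)) :
  A \in unitmx -> \rank (A *m X) = \rank X.
Proof.
move=> uA; rewrite -mxrank_tr trmx_mul mxrankMfree ?mxrank_tr //.
by rewrite row_free_unit unitmx_tr.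
Qed.

End MatrixFacts.

Section Involution.
Variables (F : numFieldType) (m : nat) (T : 'M[F]_m).
Hypothesis TT : T *m T = 1%:M.

(* Inside [%MS] (and in the argument of [\rank]) [+] is the sum of row spaces,
   hence the [%R] annotations on the matrix sums [T + 1] and [T - 1]. *)
Lemma involution_eigen_full : (1%:M <= (T + 1%:M)%R + (T - 1%:M)%R)%MS.
Proof.
have one_half_diff : 1%:M = 2^-1 *: ((T + 1%:M) - (T - 1%:M)) :> 'M[F]_m.
  have halves : 2^-1 + 2^-1 = 1 :> F by rewrite [RHS](splitr 1) mul1r.
  by rewrite opprB addrC addrA subrK scalerDr -scalerDl halves scale1r.
rewrite {1}one_half_diff; apply: scalemx_sub; apply: addmx_sub_adds.
  exact: submx_refl.
by rewrite eqmx_opp submx_refl.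
Qed.

Lemma mxrank_involution : (\rank (T + 1%:M)%R + \rank (T - 1%:M)%R)%N = m.
Proof.
apply/eqP; rewrite eqn_leq; apply/andP; split.
  have : ((T + 1%:M)%R <= kermx (T - 1%:M))%MS.
    by apply/sub_kermxP; rewrite mulmxBr mulmxDl TT mul1mx mulmx1 [1%:M + T]addrC subrr.
  by move/mxrankS; rewrite mxrank_ker; have := rank_leq_col (T - 1%:M); lia.
have := mxrankS involution_eigen_full; rewrite mxrank1 => /leq_trans; apply.
exact: (mxrank_adds_leqif _ _).1.
Qed.

End Involution.

Lemma involution_diagonalize (F : numFieldType) p q (T : 'M[F]_(p + q)) :
  T *m T = 1%:M -> \rank (T + 1%:M)%R = p -> \rank (T - 1%:M)%R = q ->
  exists2 N : 'M[F]_(p + q), N \in unitmx &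
    N *m T = block_mx 1%:M 0 0 (- 1%:M) *m N.
Proof.
move=> TT rk_plus rk_minus.
pose Np : 'M[F]_(p, p + q) := castmx (rk_plus, erefl) (row_base (T + 1%:M)%R).
pose Nm : 'M[F]_(q, p + q) := castmx (rk_minus, erefl) (row_base (T - 1%:M)%R).
have eqNp : (Np :=: (T + 1%:M)%R)%MS := eqmx_trans (eqmx_cast _ _) (eq_row_base _).
have eqNm : (Nm :=: (T - 1%:M)%R)%MS := eqmx_trans (eqmx_cast _ _) (eq_row_base _).
have NpT : Np *m T = Np.
  have /submxP[D ->] : (Np <= (T + 1%:M)%R)%MS by rewrite eqNp.
  by rewrite -mulmxA mulmxDl TT mul1mx addrC.
have NmT : Nm *m T = - Nm.
  have /submxP[D ->] : (Nm <= (T - 1%:M)%R)%MS by rewrite eqNm.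
  by rewrite -mulmxA mulmxBl TT mul1mx -mulmxN opprB.
exists (col_mx Np Nm).
  rewrite -row_full_unit -sub1mx -addsmxE (adds_eqmx eqNp eqNm).
  exact: involution_eigen_full.
by rewrite mul_col_mx NpT NmT mul_block_col !mul1mx !mul0mx addr0 add0r mulNmx mul1mx.
Qed.

Local Ltac simpl_block :=
  rewrite ?(mulmx0, mul0mx, mulmx1, mul1mx, add0r, addr0, mulNmx, mulmxN, opprK, oppr0).

Section SymplecticAlgebra.
Variables (R : realType) (n : nat).
Local Notation M := 'M[R]_(n + n).
Local Notation J := (Jmx R n).
Local Notation Rm := (Rmx R n).

Definition symplectic_mx (A : M) := A^T *m J *m A = J.
Definition antisymplectic_mx (A : M) := A^T *m J *m A = - J.

Lemma trmx_J : J^T = - J.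
Proof.
by rewrite /Jmx tr_block_mx !trmx0 trmx1 linearN /= trmx1 opp_block_mx !oppr0 opprK.
Qed.

Lemma mulJJ : J *m J = - 1%:M.
Proof.
rewrite /Jmx mulmx_block; simpl_block.
by rewrite [in RHS](scalar_mx_block n n) opp_block_mx !oppr0.
Qed.

Lemma J_unitmx : J \in unitmx.
Proof.
have JNJ : J *m (- J) = 1%:M by rewrite mulmxN mulJJ opprK.
by have [] := mulmx1_unit JNJ.
Qed.

Lemma mulRR : Rm *m Rm = 1%:M.
Proof. by rewrite /Rmx mulmx_block; simpl_block; rewrite [in RHS](scalar_mx_block n n). Qed.

Lemma mulRK (A : M) : Rm *m (Rm *m A) = A.
Proof. by rewrite mulmxA mulRR mul1mx. Qed.

Lemma trmx_R : Rm^T = Rm.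
Proof. by rewrite /Rmx tr_block_mx !trmx0 trmx1 linearN /= trmx1. Qed.

Lemma mulRJ : Rm *m J = - (J *m Rm).
Proof. by rewrite /Rmx /Jmx !mulmx_block; simpl_block; rewrite opp_block_mx; simpl_block. Qed.

Lemma antisymplectic_R : antisymplectic_mx Rm.
Proof. by rewrite /antisymplectic_mx trmx_R mulRJ mulNmx -mulmxA mulRR mulmx1. Qed.

Lemma omega_mulmx (A : M) v w :
  omega (A *m v) (A *m w) = (v^T *m (A^T *m J *m A) *m w) 0 0.
Proof. by rewrite /omega trmx_mul !mulmxA. Qed.

Lemma symplectic_invmx (A : M) : symplectic_mx A -> invmx A = - (J *m A^T *m J).
Proof.
by move=> sA; apply: invmx_uniq; rewrite mulNmx -!mulmxA [A^T *m _]mulmxA sA mulJJ opprK.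
Qed.

Lemma symplectic_unitmx (A : M) : symplectic_mx A -> A \in unitmx.
Proof.
move=> sA; have : - (J *m A^T *m J) *m A = 1%:M.
  by rewrite mulNmx -!mulmxA [A^T *m _]mulmxA sA mulJJ opprK.
by case/mulmx1_unit.
Qed.

Lemma symplecticM (A B : M) :
  symplectic_mx A -> symplectic_mx B -> symplectic_mx (A *m B).
Proof.
move=> sA sB; rewrite /symplectic_mx trmx_mul -!mulmxA.
by rewrite [A^T *m _]mulmxA [A^T *m _ *m _]mulmxA sA mulmxA sB.
Qed.

Lemma symplecticV (A : M) : symplectic_mx A -> symplectic_mx (invmx A).
Proof.
move=> sA; have uA := symplectic_unitmx sA.
have := congr1 (fun X => (invmx A)^T *m X *m invmx A) sA.
rewrite /= !mulmxA -trmx_mul mulmxV // trmx1 mul1mx -mulmxA mulmxV // mulmx1.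
by move=> JE; rewrite /symplectic_mx [in RHS]JE.
Qed.

Lemma SpE (A : M) : Sp A <-> symplectic_mx A.
Proof.
split=> [[_ omegaA]|sA].
  by apply: mx_form_eq => v w; have := omegaA v w; rewrite omega_mulmx.
by split=> [|v w]; [exact: symplectic_unitmx|rewrite omega_mulmx sA].
Qed.

Lemma antiSpE (S : M) : antiSp S <-> S *m S = 1%:M /\ antisymplectic_mx S.
Proof.
split=> [[_ [SS omegaS]]|[SS aS]].
  split=> //; apply: mx_form_eq => v w; have := omegaS v w.
  by rewrite omega_mulmx /omega mulmxN mulNmx => ->; rewrite [RHS]mxE.
split; first by case: (mulmx1_unit SS).
by split=> // v w; rewrite omega_mulmx aS /omega mulmxN mulNmx [LHS]mxE.
Qed.

Lemma SpR_antiSp (A : M) : SpR A -> antiSp (Rm *m A).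
Proof.
move=> [/SpE sA AE]; have uA := symplectic_unitmx sA.
have RAR : Rm *m A *m Rm = invmx A.
  by rewrite {1}AE !mulmxA mulRR mul1mx -mulmxA mulRR mulmx1.
apply/antiSpE; split; first by rewrite mulmxA RAR mulVmx.
rewrite /antisymplectic_mx trmx_mul -!mulmxA [Rm^T *m _]mulmxA.
by rewrite [Rm^T *m J *m _]mulmxA antisymplectic_R mulNmx mulmxN mulmxA sA.
Qed.

Lemma antiSp_SpR (S : M) : antiSp S -> SpR (Rm *m S).
Proof.
move=> /antiSpE[SS aS]; split.
  apply/SpE; rewrite /symplectic_mx trmx_mul -!mulmxA [Rm^T *m _]mulmxA.
  by rewrite [Rm^T *m J *m _]mulmxA antisymplectic_R mulNmx mulmxN mulmxA aS opprK.
have -> : invmx (Rm *m S) = S *m Rm.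
  by apply: invmx_uniq; rewrite -mulmxA mulRK.
by rewrite !mulmxA -[_ *m Rm *m Rm]mulmxA mulRR mulmx1.
Qed.

Lemma antisymplectic_intertwiner (S : M) : S *m S = 1%:M -> antisymplectic_mx S ->
  exists2 N : M, N \in unitmx & S *m N = N *m Rm.
Proof.
move=> SS aS; set T := S^T.
have TT : T *m T = 1%:M by rewrite -trmx_mul SS trmx1.
have SJ : S^T *m J = - (J *m S).
  by have := congr1 (mulmxr S) aS; rewrite /= -mulmxA SS mulmx1 mulNmx.
(* [J] exchanges the two eigenspaces of [S^T], so they have the same rank *)
have rk_eq : \rank (T + 1%:M)%R = \rank (T - 1%:M)%R.
  rewrite -(mxrankMfree _ (_ : row_free J)) ?row_free_unit ?J_unitmx //.
  rewrite mulmxDl SJ mul1mx addrC -[J in J - _]mulmx1 -mulmxBr.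
  rewrite mxrank_mulmx_unit ?J_unitmx // -mxrank_tr linearB /= trmx1 -/T.
  by rewrite -opprB eqmx_opp.
have rk_plus : \rank (T + 1%:M)%R = n.
  have := mxrank_involution TT; rewrite -rk_eq; set r := \rank _; lia.
have rk_minus : \rank (T - 1%:M)%R = n by rewrite -rk_eq.
have [N uN NT] := involution_diagonalize TT rk_plus rk_minus.
exists N^T; first by rewrite unitmx_tr.
by have := congr1 trmx NT; rewrite !trmx_mul trmxK -/(Rmx R n) trmx_R.
Qed.

End SymplecticAlgebra.

Section CosetSpace.
Variables (R : realType) (n : nat).
Local Notation M := 'M[R]_(n + n).
Local Notation J := (Jmx R n).
Local Notation Rm := (Rmx R n).

Lemma GLemb_Rcomm (A : 'M[R]_n) : GLemb A *m Rm = Rm *m GLemb A.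
Proof. by rewrite /GLemb /Rmx !mulmx_block; simpl_block. Qed.

Lemma GLembM (A B : 'M[R]_n) : A \in unitmx -> B \in unitmx ->
  GLemb A *m GLemb B = GLemb (A *m B).
Proof.
move=> uA uB; rewrite /GLemb mulmx_block; simpl_block; congr block_mx.
by rewrite trmx_mul invmxM ?unitmx_tr.
Qed.

Lemma GLemb1 : GLemb (1%:M : 'M[R]_n) = 1%:M.
Proof. by rewrite /GLemb trmx1 invmx1 -scalar_mx_block. Qed.

Lemma GLemb_unitmx (A : 'M[R]_n) : A \in unitmx -> GLemb A \in unitmx.
Proof.
move=> uA; have : GLemb A *m GLemb (invmx A) = 1%:M.
  by rewrite GLembM ?unitmx_inv // mulmxV // GLemb1.
by case/mulmx1_unit.
Qed.

Lemma coset_GLembM (A : 'M[R]_n) (P : M) : A \in unitmx ->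
  coset (GLemb A *m P) = coset P.
Proof.
move=> uA; apply/seteqP; split=> _ [_ [B uB <-] <-].
  exists (GLemb (B *m A)); first by exists (B *m A) => //=; rewrite unitmx_mul uB uA.
  by rewrite mulmxA GLembM.
exists (GLemb (B *m invmx A)).
  by exists (B *m invmx A) => //=; rewrite unitmx_mul uB unitmx_inv uA.
by rewrite mulmxA GLembM ?unitmx_inv ?unitmx_mul ?unitmx_inv ?uB // mulmxKV.
Qed.

Definition conjR (P : M) : M := invmx P *m Rm *m P.

Lemma conjR_GLembM (A : 'M[R]_n) (P : M) : A \in unitmx -> P \in unitmx ->
  conjR (GLemb A *m P) = conjR P.
Proof.
move=> uA uP; rewrite /conjR invmxM ?GLemb_unitmx // -!mulmxA; congr (_ *m _).
rewrite !mulmxA -[invmx _ *m Rm *m _]mulmxA -GLemb_Rcomm mulmxA.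
by rewrite mulVmx ?GLemb_unitmx // mul1mx.
Qed.

(* [xget] picks an arbitrary element of the coset; [conjR] does not depend
   on that choice. *)
Definition conjR_coset (C : set M) : M := conjR (xget 0 C).

Lemma conjR_cosetE (P : M) : P \in unitmx -> conjR_coset (coset P) = conjR P.
Proof.
move=> uP; rewrite /conjR_coset; have : coset P (xget 0 (coset P)).
  apply: xgetPex; exists P, 1%:M; first by exists 1%:M; [exact: unitmx1|exact: GLemb1].
  by rewrite mul1mx.
by move=> [_ [A uA <-] <-]; rewrite conjR_GLembM.
Qed.

Lemma conjR_antiSp (P : M) : Sp P -> antiSp (conjR P).
Proof.
move=> /SpE sP; have uP := symplectic_unitmx sP; apply/antiSpE; split.
  by rewrite /conjR !mulmxA mulmxK // -[invmx P *m Rm *m Rm]mulmxA mulRR mulmx1 mulVmx.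
rewrite /antisymplectic_mx /conjR !trmx_mul.
have -> : P^T *m (Rm^T *m (invmx P)^T) *m J *m (invmx P *m Rm *m P)
    = P^T *m (Rm^T *m ((invmx P)^T *m J *m invmx P) *m Rm) *m P by rewrite !mulmxA.
by rewrite (symplecticV sP) antisymplectic_R mulmxN mulNmx sP.
Qed.

Lemma Rcomm_block_diag (g : M) :
  g *m Rm = Rm *m g -> g = block_mx (ulsubmx g) 0 0 (drsubmx g).
Proof.
rewrite -{1 2}[g]submxK /Rmx !mulmx_block; simpl_block.
move=> /eq_block_mx[_ ur_eq dl_eq _].
by rewrite -{1}[g]submxK (oppmx_eq_self ur_eq) (oppmx_eq_self (esym dl_eq)).
Qed.

Lemma symplectic_block_diag (a d : 'M[R]_n) :
  symplectic_mx (block_mx a 0 0 d) -> a \in unitmx /\ d = invmx a^T.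
Proof.
rewrite /symplectic_mx /Jmx tr_block_mx !trmx0 !mulmx_block; simpl_block.
move=> /eq_block_mx[_ ad1 _ _]; have [ua _] := mulmx1_unit ad1.
by split; [rewrite -unitmx_tr|rewrite -[d]mul1mx -(mulVmx ua) -mulmxA ad1 mulmx1].
Qed.

(* [P2 P1^-1] commutes with [R], hence is block diagonal and symplectic, i.e.
   lies in the embedded [Gl(n)]. *)
Lemma conjR_eq_coset (P1 P2 : M) : symplectic_mx P1 -> symplectic_mx P2 ->
  conjR P1 = conjR P2 -> coset P1 = coset P2.
Proof.
move=> sP1 sP2 conjR_eq; have u1 := symplectic_unitmx sP1.
set g := P2 *m invmx P1.
have gR : g *m Rm = Rm *m g.
  have := congr1 (fun X => P2 *m X *m invmx P1) conjR_eq; rewrite /conjR /= !mulmxA.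
  by rewrite mulmxK // mulmxV ?symplectic_unitmx // mul1mx => gRE; rewrite /g gRE ?mulmxA.
have sg : symplectic_mx g by apply: symplecticM => //; exact: symplecticV.
have gE := Rcomm_block_diag gR; rewrite gE in sg.
have [ua dE] := symplectic_block_diag sg.
have -> : P2 = GLemb (ulsubmx g) *m P1 by rewrite /GLemb -dE -gE /g mulmxKV.
by rewrite coset_GLembM.
Qed.

Lemma Rskew_block (G : M) : Rm *m G *m Rm = - G -> G^T = - G ->
  G = block_mx 0 (ursubmx G) (- (ursubmx G)^T) 0.
Proof.
rewrite -[G]submxK /Rmx !mulmx_block tr_block_mx !opp_block_mx; simpl_block.
move=> /eq_block_mx[ul_eq _ _ dr_eq] /eq_block_mx[_ _ dl_eq _].
by rewrite block_mxKur (oppmx_eq_self (esym ul_eq)) (oppmx_eq_self (esym dr_eq)) dl_eq opprK.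
Qed.

(* An intertwiner [N] of [S] and [R] is rescaled on the second eigenspace of
   [R] so that it becomes symplectic. *)
Definition symplectic_lift (N : M) : M :=
  block_mx 1%:M 0 0 (ursubmx (N^T *m J *m N)) *m invmx N.

Lemma symplectic_lift_symplectic (S N : M) : antisymplectic_mx S ->
  S *m N = N *m Rm -> N \in unitmx -> symplectic_mx (symplectic_lift N).
Proof.
move=> aS SN uN; rewrite /symplectic_mx /symplectic_lift.
set G := N^T *m J *m N; set D := block_mx _ 0 0 _.
have RGR : Rm *m G *m Rm = - G.
  have -> : Rm *m G *m Rm = (N *m Rm)^T *m J *m (N *m Rm).
    by rewrite /G trmx_mul trmx_R !mulmxA.
  rewrite -SN trmx_mul.
  have -> : N^T *m S^T *m J *m (S *m N) = N^T *m (S^T *m J *m S) *m N.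
    by rewrite !mulmxA.
  by rewrite aS mulmxN mulNmx.
have GT : G^T = - G by rewrite /G !trmx_mul trmxK trmx_J mulNmx mulmxN !mulmxA.
have DJD : D^T *m J *m D = G.
  by rewrite [RHS]Rskew_block // /D /Jmx tr_block_mx !trmx0 trmx1 !mulmx_block; simpl_block.
rewrite trmx_mul.
have -> : (invmx N)^T *m D^T *m J *m (D *m invmx N)
    = (invmx N)^T *m (D^T *m J *m D) *m invmx N by rewrite !mulmxA.
by rewrite DJD /G !mulmxA -trmx_mul mulmxV // trmx1 mul1mx -mulmxA mulmxV // mulmx1.
Qed.

Lemma conjR_symplectic_lift (S N : M) : S *m N = N *m Rm -> N \in unitmx ->
  symplectic_mx (symplectic_lift N) -> conjR (symplectic_lift N) = S.
Proof.
move=> SN uN sL.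
have RD K : Rm *m block_mx 1%:M 0 0 K = block_mx 1%:M 0 0 K *m Rm.
  by rewrite /Rmx !mulmx_block; simpl_block.
have RN : Rm *m invmx N = invmx N *m S.
  have := congr1 (fun X => invmx N *m X *m invmx N) SN.
  by rewrite /= !mulmxA mulmxK // mulVmx // mul1mx => ->.
have RL : Rm *m symplectic_lift N = symplectic_lift N *m S.
  by rewrite /symplectic_lift mulmxA RD -mulmxA RN mulmxA.
by rewrite /conjR -mulmxA RL mulmxA mulVmx ?symplectic_unitmx // mul1mx.
Qed.

Lemma conjR_coset_antiSp (C : set M) : cosetSpace C -> antiSp (conjR_coset C).
Proof.
by move=> [P [uP omegaP] <-]; rewrite conjR_cosetE //; exact: conjR_antiSp.
Qed.

Lemma conjR_coset_inj (C D : set M) : cosetSpace C -> cosetSpace D ->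
  conjR_coset C = conjR_coset D -> C = D.
Proof.
move=> [P1 /SpE sP1 <-] [P2 /SpE sP2 <-].
by rewrite !conjR_cosetE ?symplectic_unitmx //; exact: conjR_eq_coset.
Qed.

Lemma conjR_coset_surj (S : M) : antiSp S ->
  exists C, cosetSpace C /\ conjR_coset C = S.
Proof.
move=> /antiSpE[SS aS]; have [N uN SN] := antisymplectic_intertwiner SS aS.
have sL := symplectic_lift_symplectic aS SN uN.
exists (coset (symplectic_lift N)); split; first by exists (symplectic_lift N) => //; exact/SpE.
by rewrite conjR_cosetE ?symplectic_unitmx // (conjR_symplectic_lift SN uN sL).
Qed.

End CosetSpace.

Section Diffeomorphisms.
Variables (R : realType) (n : nat).
Local Notation M := 'M[R]_(n + n).
Local Notation J := (Jmx R n).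
Local Notation Rm := (Rmx R n).

Lemma smooth_mx_mulmxl (A : M) : smooth_mx setT (fun z : M => A *m z).
Proof.
have oT : open [set: M] := openT.
exact: (smooth_mx_mul oT (smooth_mx_cst oT A) (smooth_mx_id oT)).
Qed.

Lemma SpR_diffeomorphic_antiSp : diffeomorphic (@SpR R n) (@antiSp R n).
Proof.
have sR := smooth_mx_smooth_on openT (smooth_mx_mulmxl Rm) (@subsetT _ _) (fun _ _ => erefl).
exists (mulmx Rm), (mulmx Rm); split; first exact: SpR_antiSp.
split; first exact: antiSp_SpR.
split; first by move=> S _; rewrite mulRK.
split; first by move=> S _; rewrite mulRK.
by split; exact: sR.
Qed.

Definition conjR_poly (P : M) : M := - (J *m P^T *m J) *m Rm *m P.

Lemma smooth_mx_conjR_poly : smooth_mx setT conjR_poly.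
Proof.
have oT : open [set: M] := openT.
have sC := smooth_mx_cst oT.
rewrite /conjR_poly; apply: (smooth_mx_mul oT _ (smooth_mx_id oT)).
apply: (smooth_mx_mul oT _ (sC _ _ _)).
apply: smooth_mx_opp; apply: (smooth_mx_mul oT _ (sC _ _ _)); apply: (smooth_mx_mul oT (sC _ _ _)).
exact: (smooth_mx_tr (smooth_mx_id oT)).
Qed.

Lemma conjR_polyE (P : M) : Sp P -> conjR_poly P = conjR_coset (coset P).
Proof.
move=> /SpE sP; rewrite conjR_cosetE ?symplectic_unitmx //.
by rewrite /conjR_poly /conjR symplectic_invmx.
Qed.

Lemma local_symplectic_section (Phi : M -> M) (y : M) :
  smooth_mx setT Phi -> antiSp (Phi y) ->
  exists (U : set M) (sigma : M -> M), [/\ open U, U y, smooth_mx U sigma &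
    forall z, U z -> antiSp (Phi z) ->
      symplectic_mx (sigma z) /\ conjR (sigma z) = Phi z].
Proof.
move=> sPhi /antiSpE[SS aS]; have oT : open [set: M] := openT.
have [N0 uN0 SN0] := antisymplectic_intertwiner SS aS.
(* For every involution [S], [N0 + S N0 R] intertwines [S] and [R]; at [Phi y]
   it equals [2 N0]. *)
pose N z := N0 + Phi z *m N0 *m Rm.
have sN : smooth_mx setT N.
  apply: (smooth_mx_add (smooth_mx_cst oT N0)).
  exact: (smooth_mx_mul oT (smooth_mx_mul oT sPhi (smooth_mx_cst _ _)) (smooth_mx_cst _ _)).
pose U := [set z | N z \in unitmx].
have oU : open U.
  have -> : U = (fun z => \det (N z)) @^-1` [set x | x != 0].
    by apply/seteqP; split=> z; rewrite /U /= unitmxE unitfE.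
  apply: open_comp; last exact: open_neq.
  by move=> z _; have [_ /(_ 0%N [::] isT z I)[]] := smooth_in_det oT sN.
have sNU : smooth_mx U N by move=> i j; exact: (smooth_in_subset oU (@subsetT _ _) (sN i j)).
exists U, (fun z => symplectic_lift (N z)); split; first exact: oU.
- by rewrite /U /N /= SN0 -mulmxA mulRR mulmx1 -mulr2n -scaler_nat unitmxZ ?unitfE ?pnatr_eq0.
- apply: (smooth_mx_mul oU _ (smooth_mx_inv oU (fun _ Uz => Uz) sNU)).
  apply: smooth_mx_block; [exact: (smooth_mx_cst oU)..|apply: smooth_mx_ursub].
  exact: (smooth_mx_mul oU (smooth_mx_mul oU (smooth_mx_tr sNU) (smooth_mx_cst _ _)) sNU).
- move=> z Uz /antiSpE[SSz aSz].
  have SNz : Phi z *m N z = N z *m Rm.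
    rewrite /N mulmxDr mulmxDl !mulmxA SSz mul1mx -mulmxA mulRR mulmx1 addrC.
    by rewrite ?mulmxA.
  have sL := symplectic_lift_symplectic aSz SNz Uz.
  by split; [exact: sL|exact: conjR_symplectic_lift SNz Uz sL].
Qed.

Lemma coset_diffeomorphic_mulmx (A : M) (Y : set M) : A *m A = 1%:M ->
  (forall S, Y S <-> antiSp (A *m S)) -> coset_diffeomorphic n Y.
Proof.
move=> AA YE; have AK S : A *m (A *m S) = S by rewrite mulmxA AA mul1mx.
exists (fun C => A *m conjR_coset C); split.
  by move=> C csC; apply/YE; rewrite AK; exact: conjR_coset_antiSp.
split.
  move=> C D csC csD /(congr1 (mulmx A)); rewrite !AK.
  exact: conjR_coset_inj.
split.
  by move=> S /YE/conjR_coset_surj[C [csC CE]]; exists C; rewrite CE AK.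
split.
  have oT : open [set: M] := openT.
  apply: (smooth_mx_smooth_on oT _ (@subsetT _ _)).
    exact: (smooth_mx_mul oT (smooth_mx_cst oT A) smooth_mx_conjR_poly).
  by move=> P SpP; rewrite -conjR_polyE.
move=> y /YE Yy.
have [U [sigma [oU Uy s_sigma sigmaE]]] := local_symplectic_section (smooth_mx_mulmxl A) Yy.
exists U, sigma; split; first exact: oU.
split; first exact: Uy.
split.
  exact: (smooth_mx_smooth_on oU s_sigma (@subIsetr _ _ _) (fun _ _ => erefl)).
move=> z /YE Yz Uz; have [sz zE] := sigmaE z Uz Yz.
by split; [exact/SpE|rewrite conjR_cosetE ?symplectic_unitmx // zE AK].
Qed.

End Diffeomorphisms.

Theorem theorem1 (R : realType) (n : nat) :
  diffeomorphic (@SpR R n) (@antiSp R n) /\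
  @coset_diffeomorphic R n _ (@antiSp R n) /\
  @coset_diffeomorphic R n _ (@SpR R n).
Proof.
split; first exact: SpR_diffeomorphic_antiSp.
split.
  apply: (coset_diffeomorphic_mulmx (A := 1%:M)); first exact: mulmx1.
  by move=> S; rewrite mul1mx.
apply: (coset_diffeomorphic_mulmx (A := Rmx R n)); first exact: mulRR.
by move=> S; split=> [/SpR_antiSp //|/antiSp_SpR]; rewrite mulRK.
Qed.
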